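(* Let $\varepsilon\in\{1,-1\}$, $z\in\mathbb{Z}$, $F_k(z)=\varepsilon^kD_k(z)$, and $n\in\mathbb{Z}^+$. For every polynomial $x(k)\in\mathbb{Z}[k]$, $$\sum_{k=0}^{n-1}L^{*}(x(k))F_k(z)\equiv 0\pmod n,$$ where $L^{*}(x(k))=(k+1)x(k)-\varepsilon(2k+1)(2z+1)x(k-1)+k\,x(k-2)$.
   Context: $D_n(z)=\sum_{k=0}^{n}\binom{n}{k}\binom{n+k}{k}z^k$ (Delannoy polynomials). *)

From mathcomp Require Import all_boot all_order all_algebra.
Set Implicit Arguments. Unset Strict Implicit. Unset Printing Implicit Defensive.
Import Order.TTheory GRing.Theory Num.Theory.
Local Open Scope ring_scope.

Definition delannoy (n : nat) (z : int) : int :=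
  \sum_(0 <= k < n.+1) ('C(n, k) * 'C(n + k, k))%:R * z ^+ k.

Definition Fk (eps : int) (k : nat) (z : int) : int := eps ^+ k * delannoy k z.

Definition Lstar (eps z : int) (x : {poly int}) (k : nat) : int :=
  (k%:Z + 1) * x.[k%:Z]
  - eps * (2 * k%:Z + 1) * (2 * z + 1) * x.[k%:Z - 1]
  + k%:Z * x.[k%:Z - 2].

From mathcomp Require Import all_boot all_order all_algebra.
From mathcomp Require Import ring zify.
Set Implicit Arguments. Unset Strict Implicit. Unset Printing Implicit Defensive.
Import Order.TTheory GRing.Theory Num.Theory.

(* Since D_n(z) = P_n(2z + 1) for the Legendre polynomial P_n, the Delannoy
   polynomials satisfy Legendre's three-term recurrence
     (n + 1) D_{n+1} = (2n + 1)(2z + 1) D_n - n D_{n-1},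
   which we check coefficientwise.  Hence, as eps^2 = 1,
     (k + 1) F_{k+1} = eps (2k + 1)(2z + 1) F_k - k F_{k-1}.
   The operator L* is the adjoint of this recurrence, so summation by parts
   telescopes:
     sum_{k < n} L*(x)(k) F_k = n (x(n-1) F_{n-1} - x(n-2) F_n),
   which is a multiple of n. *)

Definition delannoy_coef (n k : nat) : nat := 'C(n, k) * 'C(n + k, k).

Lemma delannoy_coef0 n : delannoy_coef n 0 = 1.
Proof. by rewrite /delannoy_coef !bin0. Qed.

Lemma delannoy_coef_small n k : (n < k)%N -> delannoy_coef n k = 0.
Proof. by move=> lt_nk; rewrite /delannoy_coef bin_small ?mul0n. Qed.

Lemma mul_delannoy_coefSn n k :
  (n.+1 - k) * delannoy_coef n.+1 k = (n.+1 + k) * delannoy_coef n k.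
Proof.
have bin_n := mul_bin_down n.+1 k.
have bin_nk := mul_bin_down (n.+1 + k) k.
rewrite addnK addSn /= in bin_nk.
rewrite /delannoy_coef mulnA -bin_n mulnAC -bin_nk; ring.
Qed.

Lemma mul_delannoy_coefnS n k :
  (n - k) * (n + k).+1 * delannoy_coef n k = k.+1 * k.+1 * delannoy_coef n k.+1.
Proof.
have bin_n := mul_bin_left n k.
have bin_nk := mul_bin_diag (n + k).+1 k.
rewrite /delannoy_coef addnS.
have -> : k.+1 * k.+1 * ('C(n, k.+1) * 'C((n + k).+1, k.+1))
  = (k.+1 * 'C(n, k.+1)) * (k.+1 * 'C((n + k).+1, k.+1)) by ring.
by rewrite bin_n -bin_nk; ring.
Qed.

Lemma delannoy_coef_rec n k :
  n.+1 * delannoy_coef n.+1 k.+1 + n * delannoy_coef n.-1 k.+1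
  = (2 * n + 1) * delannoy_coef n k.+1 + 2 * (2 * n + 1) * delannoy_coef n k.
Proof.
case: (ltngtP k n) => [lt_kn | lt_nk | <-{n}].
- have [m ->] : exists m, n = (k + m).+1 by exists (n - k.+1); lia.
  have next_row := mul_delannoy_coefSn (k + m).+1 k.+1.
  have prev_row := mul_delannoy_coefSn (k + m) k.+1.
  have next_col := mul_delannoy_coefnS (k + m).+1 k.
  rewrite (_ : (k + m).+2 - k.+1 = m.+1) in next_row; last by lia.
  rewrite (_ : (k + m).+1 - k.+1 = m) in prev_row; last by lia.
  rewrite (_ : (k + m).+1 - k = m.+1) in next_col; last by lia.
  rewrite -addnS in next_col.
  (* Each coefficient is a rational multiple of [b]; clear the denominator
     (n - k)(n + k + 1) = m.+1 * c. *)
  set b := delannoy_coef (k + m).+1 k.+1 in next_row prev_row next_col *.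
  set c := (k + m).+1 + k.+1 in prev_row next_col *.
  apply/eqP; rewrite -(eqn_pmul2l (_ : 0 < m.+1 * c)) //; apply/eqP.
  transitivity (c * (k + m).+2 * (m.+1 * delannoy_coef (k + m).+2 k.+1)
                + (k + m).+1 * m.+1 * (c * delannoy_coef (k + m) k.+1)); first by ring.
  rewrite next_row -prev_row.
  transitivity (m.+1 * c * (2 * (k + m).+1 + 1) * b
      + 2 * (2 * (k + m).+1 + 1) * (m.+1 * c * delannoy_coef (k + m).+1 k)); last by ring.
  by rewrite next_col /c; ring.
- by rewrite !delannoy_coef_small //; lia.
- rewrite (@delannoy_coef_small k.-1 k.+1) ?(@delannoy_coef_small k k.+1) //; last by lia.
  have next_col := mul_delannoy_coefnS k.+1 k.
  have next_row := mul_delannoy_coefSn k k.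
  rewrite subSnn mul1n in next_col; rewrite subSnn mul1n in next_row.
  apply/eqP; rewrite -(eqn_pmul2l (ltn0Sn k)); apply/eqP.
  transitivity (k.+1 * k.+1 * delannoy_coef k.+1 k.+1); first by ring.
  by rewrite -next_col next_row; ring.
Qed.

Local Open Scope ring_scope.

Lemma delannoyE N n z : (n < N)%N ->
  delannoy n z = \sum_(0 <= k < N) (delannoy_coef n k)%:R * z ^+ k.
Proof.
move=> lt_nN; rewrite /delannoy (@big_cat_nat _ _ _ n.+1 0 N _ _ (leq0n _) lt_nN) /=.
rewrite -[LHS]addr0; congr (_ + _); symmetry.
rewrite big_nat_cond big1 // => k /andP[/andP[lt_nk _] _].
by rewrite delannoy_coef_small // mul0r.
Qed.

Lemma delannoy_rec n z :
  n.+1%:Z * delannoy n.+1 z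
  = (2 * n%:Z + 1) * (2 * z + 1) * delannoy n z - n%:Z * delannoy n.-1 z.
Proof.
apply: (addIr (n%:Z * delannoy n.-1 z)); rewrite subrK.
have shift : z * delannoy n z
    = \sum_(0 <= k < n.+2) (delannoy_coef n k)%:R * z ^+ k.+1.
  rewrite (@delannoyE n.+2) // mulr_sumr.
  by apply: eq_bigr => k _; rewrite exprS; ring.
transitivity ((2 * n%:Z + 1) * delannoy n z
              + 2 * (2 * n%:Z + 1) * (z * delannoy n z)); last by ring.
rewrite shift !(@delannoyE n.+3) //; [ | lia..].
rewrite !(big_nat_recl n.+2) //= !delannoy_coef0.
rewrite [n.+1%:Z * _]mulrDr [n%:Z * (_ + _)]mulrDr.
rewrite [(2 * n%:Z + 1) * (_ + _)]mulrDr.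
rewrite !mulr_sumr addrACA -[RHS]addrA -!big_split /=; congr (_ + _); first by ring.
apply: eq_bigr => k _.
transitivity ((n.+1 * delannoy_coef n.+1 k.+1 + n * delannoy_coef n.-1 k.+1)%:R
              * z ^+ k.+1); first by ring.
by rewrite delannoy_coef_rec; ring.
Qed.

Lemma Fk_rec eps z n : eps ^+ 2 = 1 ->
  n.+1%:Z * Fk eps n.+1 z
  = eps * (2 * n%:Z + 1) * (2 * z + 1) * Fk eps n z - n%:Z * Fk eps n.-1 z.
Proof.
move=> eps2; rewrite /Fk mulrCA delannoy_rec.
case: n => [|n] /=; first by ring.
have epsSS : eps ^+ n.+2 = eps ^+ n by rewrite -addn2 exprD eps2 mulr1.
by rewrite mulrBr; congr (_ - _); [rewrite exprS | rewrite epsSS]; ring.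
Qed.

Lemma sum_Lstar_telescope eps z (x : {poly int}) (F : nat -> int) n :
  (forall k, k.+1%:Z * F k.+1
             = eps * (2 * k%:Z + 1) * (2 * z + 1) * F k - k%:Z * F k.-1) ->
  \sum_(0 <= k < n) Lstar eps z x k * F k
  = n%:Z * (x.[n%:Z - 1] * F n.-1 - x.[n%:Z - 2] * F n).
Proof.
move=> F_rec; elim: n => [|n IHn]; first by rewrite big_geq // mul0r.
rewrite big_nat_recr //= IHn /Lstar.
have -> : n.+1%:Z - 1 = n%:Z by lia.
have -> : n.+1%:Z - 2 = n%:Z - 1 by lia.
transitivity (n.+1%:Z * x.[n%:Z] * F n - x.[n%:Z - 1] * (n.+1%:Z * F n.+1)); last by ring.
by rewrite F_rec; ring.
Qed.

Theorem corollary2p3 (eps z : int) (n : nat) (x : {poly int}) :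
  (eps = 1 \/ eps = -1) -> (0 < n)%N ->
  (n%:Z %| \sum_(0 <= k < n) Lstar eps z x k * Fk eps k z)%Z.
Proof.
move=> eps_unit _.
have eps2 : eps ^+ 2 = 1 by case: eps_unit => ->; rewrite ?expr1n ?sqrrN1.
rewrite (sum_Lstar_telescope _ _ (fun k => Fk_rec z k eps2)).
exact: dvdz_mulr (dvdzz _).
Qed.
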